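(* Let $y = \lambda_7^2\lambda_5\lambda_{14} + \lambda_7^2\lambda_9\lambda_{10} + \lambda_7\lambda_{11}\lambda_9\lambda_6 \in \Lambda_4$ and let $x \in H_{33}(B(\mathbb{Z}/2)^4)$ be the sum of the 62 monomials $a_4^{(t_4)}a_3^{(t_3)}a_2^{(t_2)}a_1^{(t_1)}$ with $(t_4,t_3,t_2,t_1)$ ranging over (14,5,7,7), (14,3,9,7), (14,3,5,11), (14,3,3,13), (13,6,7,7), (13,3,10,7), (13,3,6,11), (13,3,3,14), (11,6,9,7), (11,6,5,11), (11,6,3,13), (11,5,10,7), (11,5,6,11), (11,5,3,14), (10,9,7,7), (10,7,9,7), (10,7,5,11), (10,7,3,13), (10,5,11,7), (10,3,13,7), (9,10,7,7), (9,7,10,7), (9,7,6,11), (9,7,3,14), (9,6,11,7), (9,3,14,7), (7,10,9,7), (7,10,5,11), (7,10,3,13), (7,9,10,7), (7,9,6,11), (7,9,3,14), (7,6,13,7), (7,5,14,7), (6,13,7,7), (6,11,9,7), (6,11,5,11), (6,11,3,13), (6,9,7,11), (6,7,7,13), (6,5,11,11), (6,3,13,11), (5,14,7,7), (5,11,10,7), (5,11,6,11), (5,11,3,14), (5,10,7,11), (5,7,7,14), (5,6,11,11), (5,3,14,11), (3,14,9,7), (3,14,5,11), (3,14,3,13), (3,13,10,7), (3,13,6,11), (3,13,3,14), (3,10,7,13), (3,9,7,14), (3,6,11,13), (3,5,11,14), (3,3,14,13), (3,3,13,14). Then $x \in P_{\mathcal{A}}H_{33}(B(\mathbb{Z}/2)^4)$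 and $\varphi_4(x) = y$ in $\Lambda_4$. Consequently $x$ is an explicit preimage under the Singer transfer $\varphi_4$ of the indecomposable class $p_0 \in \mathrm{Ext}_{\mathcal{A}}^{4,37}(\mathbb{Z}/2,\mathbb{Z}/2)$, represented by $y$; in particular $p_0$ lies in the image of $\varphi_4$.
   Context: The Lambda algebra $\Lambda$ is the differential algebra over $\mathbb{Z}/2$ generated by $\lambda_t$, $t\ge 0$, subject to the Adem relations $\lambda_a\lambda_b = \sum_j\binom{j-b-1}{2j-a}\lambda_{a+b-j}\lambda_j$ for $a>2b$, with differential the derivation given by $\delta(\lambda_m) = \sum_{t\ge 0}\binom{m-1-t}{t+1}\lambda_{m-1-t}\lambda_t$; $\Lambda_k$ is the span of length-$k$ monomials, and its cohomology computes $\mathrm{Ext}_{\mathcal{A}}^{k,*}(\mathbb{Z}/2,\mathbb{Z}/2)$ ($\mathcal{A}$ the mod 2 Steenrod algebra). The element $y$ is a cocycle representing $p_0$. $H_*(B(\mathbb{Z}/2)^k)=\Gamma[a_k,\dots,a_1]$ is the divided power algebra with basis $a_k^{(t_k)}\cdots a_1^{(t_1)}$ of degree $\sum t_i$; dual Steenrod squares act on the right by $(a^{(t)})Sq_*^j = \binom{t-j}{j}a^{(t-j)}$ and the Cartan formula; $P_{\mathcal{A}}H_*$ consists of $x$ with $(x)Sq_*^{2^t} = 0$ for all $t\ge0$. The transfer $\varphi_k : H_*(B(\mathbb{Z}/2)^k)\to\Lambda_k$ is defined by $\varphi_1(a_1^{(t)})=\lambda_t$ and $\varphi_k(a_k^{(t_k)}\cdots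 a_1^{(t_1)}) = \sum_{i\ge t_1}\lambda_i\,\varphi_{k-1}((a_k^{(t_k)}\cdots a_2^{(t_2)})Sq_*^{i-t_1})$, with $a_k,\dots,a_2$ renamed $a_{k-1},\dots,a_1$ in the argument of $\varphi_{k-1}$. A class $[y]$ is in the image of $\varphi_k$ if $[y]=[\varphi_k(x)]$ for some $x\in P_{\mathcal{A}}H_*(B(\mathbb{Z}/2)^k)$. *)

(* Everything is over Z/2 and represented by
   explicit formal sums: a formal sum is a list of monomials, the coefficient
   of a monomial being its multiplicity mod 2. *)
From mathcomp Require Import all_boot.

Set Implicit Arguments.
Unset Strict Implicit.
Unset Printing Implicit Defensive.

(* A monomial is a list of natural numbers.
   - In H_*(B(Z/2)^k) = Gamma[a_k,...,a_1], the list [:: t_k; ...; t_1]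
     stands for a_k^(t_k) ... a_1^(t_1).
   - In the (free algebra underlying the) Lambda algebra, the list
     [:: i_1; ...; i_k] stands for lambda_{i_1} ... lambda_{i_k}. *)
Definition mono := seq nat.
Definition fsum := seq mono.

Definition feq (s1 s2 : fsum) : Prop :=
  forall m : mono, odd (count_mem m s1) = odd (count_mem m s2).

(* (a^(t)) Sq_*^j = binom(t-j, j) a^(t-j)  (zero if j > t), extended to
   monomials by the Cartan formula:
   (a_k^(t_k) ... a_1^(t_1)) Sq_*^j
     = sum_{j_k + ... + j_1 = j} prod_i (a_i^(t_i)) Sq_*^{j_i}. *)
Fixpoint sqmon (j : nat) (m : mono) : fsum :=
  match m with
  | [::] => if j == 0 then [:: [::]] else [::]
  | t :: m' =>
      flatten [seq (if (i <= t) && odd 'C(t - i, i)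
                    then [seq (t - i) :: r | r <- sqmon (j - i) m']
                    else [::]) | i <- iota 0 j.+1]
  end.

Definition sq (j : nat) (x : fsum) : fsum := flatten [seq sqmon j m | m <- x].

Definition primitive (x : fsum) : Prop := forall t : nat, feq (sq (2 ^ t) x) [::].

(* phi_1(a_1^(t)) = lambda_t;
   phi_k(a_k^(t_k)...a_1^(t_1))
     = sum_{i >= t_1} lambda_i phi_{k-1}((a_k^(t_k)...a_2^(t_2)) Sq_*^{i-t_1}).
   The sum over i is finite: Sq_*^j vanishes on a monomial of degree < j,
   so only t_1 <= i <= t_1 + (t_k + ... + t_2) contribute; we sum over
   exactly that range.  phi 0 is the identity on the empty monomial. *)
Fixpoint phi (k : nat) (m : mono) : fsum :=
  match k with
  | 0 => [:: [::]]
  | 1 => [:: m]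
  | k'.+1 =>
      let t1 := last 0 m in
      let rest := belast 0 m in
      flatten [seq [seq i :: l | r <- sqmon (i - t1) (behead rest),
                                 l <- phi k' r]
              | i <- iota t1 (sumn (behead rest)).+1]
  end.

Definition phi_lin (k : nat) (x : fsum) : fsum := flatten [seq phi k m | m <- x].

(* For a > 2b, the Adem relation
     lambda_a lambda_b = sum_j binom(j-b-1, 2j-a) lambda_{a+b-j} lambda_j
   gives the element  adem a b := lambda_a lambda_b + sum_j ...  which is 0
   in Lambda.  Only j with 2j >= a (hence j > b) and j <= a+b contribute. *)
Definition adem (a b : nat) : fsum :=
  [:: [:: a; b]] ++
  [seq [:: a + b - j; j] | j <- iota 0 (a + b).+1 &
      (a <= j.*2) && odd 'C(j - b - 1, j.*2 - a)].

Definition relgen (g : mono * nat * nat * mono) : fsum :=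
  let: (u, a, b, v) := g in [seq u ++ r ++ v | r <- adem a b].

(* Equality in Lambda = free associative Z/2-algebra on the lambda_t modulo
   the two-sided ideal generated by the Adem relations (a > 2b): s1 - s2 is
   a Z/2-linear combination of elements u (adem a b) v. *)
Definition lam_eq (s1 s2 : fsum) : Prop :=
  exists gens : seq (mono * nat * nat * mono),
    all (fun g : mono * nat * nat * mono => let: (_, a, b, _) := g in b.*2 < a) gens
    /\ feq (s1 ++ s2) (flatten [seq relgen g | g <- gens]).

Definition y_p0 : fsum :=
  [:: [:: 7; 7; 5; 14]; [:: 7; 7; 9; 10]; [:: 7; 11; 9; 6]].

Definition x_p0 : fsum :=
  [:: [:: 14;5;7;7]; [:: 14;3;9;7]; [:: 14;3;5;11]; [:: 14;3;3;13];
      [:: 13;6;7;7]; [:: 13;3;10;7]; [:: 13;3;6;11]; [:: 13;3;3;14];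
      [:: 11;6;9;7]; [:: 11;6;5;11]; [:: 11;6;3;13]; [:: 11;5;10;7];
      [:: 11;5;6;11]; [:: 11;5;3;14]; [:: 10;9;7;7]; [:: 10;7;9;7];
      [:: 10;7;5;11]; [:: 10;7;3;13]; [:: 10;5;11;7]; [:: 10;3;13;7];
      [:: 9;10;7;7]; [:: 9;7;10;7]; [:: 9;7;6;11]; [:: 9;7;3;14];
      [:: 9;6;11;7]; [:: 9;3;14;7]; [:: 7;10;9;7]; [:: 7;10;5;11];
      [:: 7;10;3;13]; [:: 7;9;10;7]; [:: 7;9;6;11]; [:: 7;9;3;14];
      [:: 7;6;13;7]; [:: 7;5;14;7]; [:: 6;13;7;7]; [:: 6;11;9;7];
      [:: 6;11;5;11]; [:: 6;11;3;13]; [:: 6;9;7;11]; [:: 6;7;7;13];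
      [:: 6;5;11;11]; [:: 6;3;13;11]; [:: 5;14;7;7]; [:: 5;11;10;7];
      [:: 5;11;6;11]; [:: 5;11;3;14]; [:: 5;10;7;11]; [:: 5;7;7;14];
      [:: 5;6;11;11]; [:: 5;3;14;11]; [:: 3;14;9;7]; [:: 3;14;5;11];
      [:: 3;14;3;13]; [:: 3;13;10;7]; [:: 3;13;6;11]; [:: 3;13;3;14];
      [:: 3;10;7;13]; [:: 3;9;7;14]; [:: 3;6;11;13]; [:: 3;5;11;14];
      [:: 3;3;14;13]; [:: 3;3;13;14]].

(* Sq_*^j vanishes on monomials of degree < j, so primitivity of the degree-33
   class x only has to be checked for the squares Sq_*^(2^t) with 2^t <= 33,
   which is a finite computation.  The transfer image phi_4(x) already agrees
   with y in the free algebra on the lambda_i, so no Adem relation is needed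
   to identify it with y in Lambda. *)
From mathcomp Require Import all_boot.

Definition fsum0b (s : fsum) : bool := all (fun m => ~~ odd (count_mem m s)) s.

Lemma fsum0P s : reflect (feq s [::]) (fsum0b s).
Proof.
apply: (iffP allP) => [even_s m | s0 m _]; last by rewrite s0.
have [/even_s/negbTE -> // | m_notin_s] := boolP (m \in s).
by rewrite (count_memPn m_notin_s).
Qed.

Lemma feq_cat0 s1 s2 : feq (s1 ++ s2) [::] <-> feq s1 s2.
Proof.
split=> eq_s m; have := eq_s m; rewrite /= count_cat oddD;
  by case: (odd _); case: (odd _).
Qed.

Lemma feq_lam_eq s1 s2 : feq s1 s2 -> lam_eq s1 s2.
Proof. by move/feq_cat0=> eq_s; exists [::]. Qed.

Lemma flatten_map_nil (A : eqType) (B : Type) (f : A -> seq B) (s : seq A) :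
  {in s, forall a, f a = [::]} -> flatten (map f s) = [::].
Proof. by move/eq_in_map ->; elim: s. Qed.

Lemma sqmon_eq0 j m : sumn m < j -> sqmon j m = [::].
Proof.
elim: m j => [|t m IHm] j deg_lt; first by case: j deg_lt.
apply: flatten_map_nil => i _; rewrite -/sqmon.
case: ifP => // /andP [le_it _].
by rewrite IHm // ltn_subRL (leq_ltn_trans _ deg_lt) //= leq_add2r.
Qed.

Lemma sq_eq0 j x : all (fun m => sumn m < j) x -> sq j x = [::].
Proof. by move=> /allP deg_lt; apply: flatten_map_nil => m /deg_lt /sqmon_eq0. Qed.

Definition primitive_upto (n : nat) (x : fsum) : bool :=
  all (fun t => fsum0b (sq (2 ^ t) x)) (iota 0 (trunc_log 2 n).+1).

Lemma primitive_uptoP n x :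
  all (fun m => sumn m <= n) x -> primitive_upto n x -> primitive x.
Proof.
move=> /allP deg_le /allP checked t.
have [le_2t_n | lt_n_2t] := leqP (2 ^ t) n.
  apply/fsum0P/checked; rewrite mem_iota add0n ltnS.
  exact: trunc_log_max.
rewrite sq_eq0 //; apply/allP => m /deg_le le_m_n.
exact: leq_ltn_trans le_m_n lt_n_2t.
Qed.

Theorem mainTheorem4 :
  [/\ size x_p0 = 62, uniq x_p0,
      all (fun m : mono => (size m == 4) && (sumn m == 33)) x_p0,
      primitive x_p0
    & lam_eq (phi_lin 4 x_p0) y_p0].
Proof.
have x_homog : all (fun m : mono => (size m == 4) && (sumn m == 33)) x_p0.
  by vm_compute.
split.
- by [].
- by vm_compute.
- exact: x_homog.
- apply: (primitive_uptoP 33); last by vm_compute.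
  by apply: sub_all x_homog => m /andP [_ /eqP ->].
- by apply/feq_lam_eq/feq_cat0/fsum0P; vm_compute.
Qed.
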